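(* Let $\mathcal{A}=(A,0^\mathcal{A},1^\mathcal{A},\land^\mathcal{A},\lor^\mathcal{A},\to^\mathcal{A})$ be an algebraic interpretation. (1) If $\mathcal{A}$ is consistent with $\vdash_\mathsf{IPC}$, then $\mathcal{A}$ is a Heyting algebra. (2) If $\mathcal{A}$ is consistent with $\vdash_\mathsf{CPC}$, then, defining $a'=a\to^\mathcal{A}0^\mathcal{A}$, the structure $(A,0^\mathcal{A},1^\mathcal{A},\land^\mathcal{A},\lor^\mathcal{A},')$ is a Boolean algebra.
   Context: The language is generated from a countably infinite set $\mathit{Prop}$ of variables by $\bot,\top,\land,\lor,\to$; $\vdash_\mathsf{IPC}$ and $\vdash_\mathsf{CPC}$ are the intuitionistic and classical propositional consequence relations. An algebraic interpretation is any structure $\mathcal{A}=(A,0^\mathcal{A},1^\mathcal{A},\land^\mathcal{A},\lor^\mathcal{A},\to^\mathcal{A})$ (two constants, three binary operations) such that the relation $a\leq^\mathcal{A}b\iff a\land^\mathcal{A}b=a$ is a partial order on $A$ having $1^\mathcal{A}$ as largest element; no other conditions are imposed. A valuation is a map $v:\mathit{Prop}\to A$, and $[\![\varphi]\!]_v$ is the value of $\varphi$ under the unique homomorphic extension of $v$ ($\bot\mapsto0^\mathcal{A}$, $\top\mapsto1^\mathcal{A}$, connectives to the corresponding operations). $\mathcal{A}$ is consistent with $\vdash$ if whenever $\psi_1,\ldots,\psi_n\vdash\varphi$, for every valuation $v$ and every $c\in A$, if $c\leq^\mathcal{A}[\![\psi_i]\!]_v$ for all $i=1,\ldots,n$ then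 $c\leq^\mathcal{A}[\![\varphi]\!]_v$ (for $n=0$ this means $[\![\varphi]\!]_v=1^\mathcal{A}$). *)

From Stdlib Require Import List.
Import ListNotations.

Inductive form : Type :=
| Var : nat -> form
| Bot : form
| Top : form
| And : form -> form -> form
| Or  : form -> form -> form
| Imp : form -> form -> form.

Inductive ipc_axiom : form -> Prop :=
| ax_K  : forall a b, ipc_axiom (Imp a (Imp b a))
| ax_S  : forall a b c,
    ipc_axiom (Imp (Imp a (Imp b c)) (Imp (Imp a b) (Imp a c)))
| ax_andE1 : forall a b, ipc_axiom (Imp (And a b) a)
| ax_andE2 : forall a b, ipc_axiom (Imp (And a b) b)
| ax_andI  : forall a b, ipc_axiom (Imp a (Imp b (And a b)))
| ax_orI1  : forall a b, ipc_axiom (Imp a (Or a b))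
| ax_orI2  : forall a b, ipc_axiom (Imp b (Or a b))
| ax_orE   : forall a b c,
    ipc_axiom (Imp (Imp a c) (Imp (Imp b c) (Imp (Or a b) c)))
| ax_efq   : forall a, ipc_axiom (Imp Bot a)
| ax_top   : ipc_axiom Top.

Inductive cpc_axiom : form -> Prop :=
| ax_ipc : forall a, ipc_axiom a -> cpc_axiom a
| ax_lem : forall a, cpc_axiom (Or a (Imp a Bot)).

Inductive derivable (ax : form -> Prop) (G : list form) : form -> Prop :=
| d_hyp : forall a, In a G -> derivable ax G a
| d_ax  : forall a, ax a -> derivable ax G a
| d_mp  : forall a b, derivable ax G (Imp a b) -> derivable ax G a ->
          derivable ax G b.

Definition IPC_entails (G : list form) (a : form) : Prop := derivable ipc_axiom G a.
Definition CPC_entails (G : list form) (a : form) : Prop := derivable cpc_axiom G a.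

Section Alg.
Variables (A : Type) (zero one : A) (meet join imp : A -> A -> A).

Definition le (a b : A) : Prop := meet a b = a.

Definition is_alg_interp : Prop :=
  (forall a, le a a) /\
  (forall a b, le a b -> le b a -> a = b) /\
  (forall a b c, le a b -> le b c -> le a c) /\
  (forall a, le a one).

Fixpoint eval (v : nat -> A) (f : form) : A :=
  match f with
  | Var p => v p
  | Bot => zero
  | Top => one
  | And a b => meet (eval v a) (eval v b)
  | Or a b => join (eval v a) (eval v b)
  | Imp a b => imp (eval v a) (eval v b)
  end.

Definition consistent_with (ent : list form -> form -> Prop) : Prop :=
  forall (G : list form) (phi : form), ent G phi ->
  forall (v : nat -> A) (c : A),
    (forall psi, In psi G -> le c (eval v psi)) -> le c (eval v phi).

Definition is_bounded_lattice : Prop :=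
  (forall a, le a a) /\
  (forall a b, le a b -> le b a -> a = b) /\
  (forall a b c, le a b -> le b c -> le a c) /\
  (forall a b, le (meet a b) a /\ le (meet a b) b) /\
  (forall a b c, le c a -> le c b -> le c (meet a b)) /\
  (forall a b, le a (join a b) /\ le b (join a b)) /\
  (forall a b c, le a c -> le b c -> le (join a b) c) /\
  (forall a, le zero a) /\
  (forall a, le a one).

Definition is_heyting_algebra : Prop :=
  is_bounded_lattice /\
  (forall a b c, le c (imp a b) <-> le (meet c a) b).

Definition is_boolean_algebra (compl : A -> A) : Prop :=
  is_bounded_lattice /\
  (forall a b c, meet a (join b c) = join (meet a b) (meet a c)) /\
  (forall a, meet a (compl a) = zero /\ join a (compl a) = one).

End Alg.

(** The proof is a soundness argument read backwards: each defining law of a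
    Heyting (resp. Boolean) algebra is the image, under a valuation sending
    three propositional variables to the elements at hand, of a small
    derivation in IPC (resp. CPC), e.g. [p ∧ q ⊢ p] gives [a ∧ b ≤ a],
    [p → q, p ⊢ q] gives [c ≤ a → b ⇒ c ∧ a ≤ b], and [⊢ p ∨ ¬p] gives
    [a ∨ a' = 1]. Consistency transports each derivation into the order. *)

From Pilot Require Import Defs.
From Stdlib Require Import List.
Import ListNotations.

Notation p := (Var 0).
Notation q := (Var 1).
Notation r := (Var 2).

Definition val3 {A : Type} (x y z : A) (n : nat) : A :=
  match n with 0 => x | 1 => y | _ => z end.

Ltac by_hyp := apply d_hyp; simpl; auto.

Section Consequence.

Variable ax : form -> Prop.
Hypothesis ax_ipc : forall f, ipc_axiom f -> ax f.

Local Notation "G |- f" := (derivable ax G f) (at level 70).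

Lemma derivable_ipc_axiom G f : ipc_axiom f -> G |- f.
Proof. intro Hf. apply d_ax, ax_ipc, Hf. Qed.

Lemma derivable_mp2 G a b c : G |- Imp a (Imp b c) -> G |- a -> G |- b -> G |- c.
Proof. intros Habc Ha Hb. apply (d_mp _ _ b); [apply (d_mp _ _ a)|]; assumption. Qed.

Lemma derivable_deduction G a b : a :: G |- b -> G |- Imp a b.
Proof.
  induction 1 as [b [<- | Hin] | b Hb | b c _ IHbc _ IHb].
  - apply (derivable_mp2 _ (Imp a (Imp (Imp a a) a)) (Imp a (Imp a a)));
      apply derivable_ipc_axiom; constructor.
  - apply (d_mp _ _ b); [apply derivable_ipc_axiom; constructor | by_hyp].
  - apply (d_mp _ _ b); [apply derivable_ipc_axiom; constructor | apply d_ax, Hb].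
  - apply (derivable_mp2 _ (Imp a (Imp b c)) (Imp a b));
      [apply derivable_ipc_axiom; constructor | exact IHbc | exact IHb].
Qed.

Lemma derivable_and_intro G a b : G |- a -> G |- b -> G |- And a b.
Proof. apply derivable_mp2, derivable_ipc_axiom; constructor. Qed.

Lemma derivable_and_elim_l G a b : G |- And a b -> G |- a.
Proof. apply d_mp, derivable_ipc_axiom; constructor. Qed.

Lemma derivable_and_elim_r G a b : G |- And a b -> G |- b.
Proof. apply d_mp, derivable_ipc_axiom; constructor. Qed.

Lemma derivable_or_intro_l G a b : G |- a -> G |- Or a b.
Proof. apply d_mp, derivable_ipc_axiom; constructor. Qed.

Lemma derivable_or_intro_r G a b : G |- b -> G |- Or a b.
Proof. apply d_mp, derivable_ipc_axiom; constructor. Qed.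

Lemma derivable_or_elim G a b c :
  G |- Or a b -> a :: G |- c -> b :: G |- c -> G |- c.
Proof.
  intros Hab Hac Hbc. apply (d_mp _ _ (Or a b)); [|exact Hab].
  apply (derivable_mp2 _ (Imp a c) (Imp b c)); [apply derivable_ipc_axiom; constructor| |];
    apply derivable_deduction; assumption.
Qed.

Lemma derivable_bot_elim G a : G |- Bot -> G |- a.
Proof. apply d_mp, derivable_ipc_axiom; constructor. Qed.

Section Interpretation.

Variables (A : Type) (zero one : A) (meet join imp : A -> A -> A).
Hypothesis interp : is_alg_interp A one meet.
Hypothesis consistent : consistent_with A zero one meet join imp (derivable ax).

Local Notation le := (le A meet).
Local Notation ev := (eval A zero one meet join imp).

Lemma le_refl a : le a a.
Proof. destruct interp as (refl & _). apply refl. Qed.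

Lemma le_antisym a b : le a b -> le b a -> a = b.
Proof. destruct interp as (_ & antisym & _). apply antisym. Qed.

Lemma le_trans a b c : le a b -> le b c -> le a c.
Proof. destruct interp as (_ & _ & trans & _). apply trans. Qed.

Lemma le_one a : le a one.
Proof. destruct interp as (_ & _ & _ & top). apply top. Qed.

Lemma derivable1_le v psi phi : [psi] |- phi -> le (ev v psi) (ev v phi).
Proof. intro D. apply (consistent _ _ D). intros ? [<- | []]. apply le_refl. Qed.

Lemma derivable2_le v psi1 psi2 phi c :
  [psi1; psi2] |- phi -> le c (ev v psi1) -> le c (ev v psi2) -> le c (ev v phi).
Proof. intros D H1 H2. apply (consistent _ _ D). intros ? [<- | [<- | []]]; assumption. Qed.

Lemma derivable0_one v phi : [] |- phi -> ev v phi = one.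
Proof.
  intro D. apply le_antisym; [apply le_one|].
  apply (consistent _ _ D). intros ? [].
Qed.

Lemma meet_le_l a b : le (meet a b) a.
Proof.
  apply (derivable1_le (val3 a b a) (And p q) p).
  apply (derivable_and_elim_l _ _ q). by_hyp.
Qed.

Lemma meet_le_r a b : le (meet a b) b.
Proof.
  apply (derivable1_le (val3 a b a) (And p q) q).
  apply (derivable_and_elim_r _ p). by_hyp.
Qed.

Lemma meet_glb a b c : le c a -> le c b -> le c (meet a b).
Proof.
  apply (derivable2_le (val3 a b a) p q (And p q)).
  apply derivable_and_intro; by_hyp.
Qed.

Lemma join_ge_l a b : le a (join a b).
Proof.
  apply (derivable1_le (val3 a b a) p (Or p q)).
  apply derivable_or_intro_l. by_hyp.
Qed.

Lemma join_ge_r a b : le b (join a b).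
Proof.
  apply (derivable1_le (val3 a b a) q (Or p q)).
  apply derivable_or_intro_r. by_hyp.
Qed.

Lemma zero_le a : le zero a.
Proof.
  apply (derivable1_le (val3 a a a) Bot p).
  apply derivable_bot_elim. by_hyp.
Qed.

Lemma imp_elim a b c : le c (imp a b) -> le (meet c a) b.
Proof.
  intro Hc.
  apply (derivable2_le (val3 a b a) (Imp p q) p q).
  - apply (d_mp _ _ p); by_hyp.
  - exact (le_trans _ _ _ (meet_le_l c a) Hc).
  - apply meet_le_r.
Qed.

(* Rewriting [b] as [b ∧ c] reduces monotonicity to [q → (p ∧ r) ⊢ q → r]. *)
Lemma imp_mono_r a b c : le b c -> le (imp a b) (imp a c).
Proof.
  intro Hbc. unfold Defs.le in Hbc. rewrite <- Hbc.
  apply (derivable1_le (val3 b a c) (Imp q (And p r)) (Imp q r)).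
  apply derivable_deduction, (derivable_and_elim_r _ p), (d_mp _ _ q); by_hyp.
Qed.

Lemma imp_intro a b c : le (meet c a) b -> le c (imp a b).
Proof.
  intro Hcab. apply (le_trans _ (imp a (meet c a))), imp_mono_r, Hcab.
  apply (derivable1_le (val3 c a c) p (Imp q (And p q))).
  apply derivable_deduction, derivable_and_intro; by_hyp.
Qed.

Lemma one_le_imp a b : le a b -> le one (imp a b).
Proof. intro Hab. apply imp_intro, (le_trans _ a); [apply meet_le_r | exact Hab]. Qed.

Lemma join_lub a b c : le a c -> le b c -> le (join a b) c.
Proof.
  intros Hac Hbc.
  apply (consistent [Imp p r; Imp q r; Or p q] r) with (v := val3 a b c).
  - apply (derivable_or_elim _ p q); [by_hyp | apply (d_mp _ _ p) | apply (d_mp _ _ q)];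
      by_hyp.
  - intros ? [<- | [<- | [<- | []]]]; simpl.
    + apply (le_trans _ one); [apply le_one | apply one_le_imp, Hac].
    + apply (le_trans _ one); [apply le_one | apply one_le_imp, Hbc].
    + apply le_refl.
Qed.

Lemma bounded_lattice_of_consistent : is_bounded_lattice A zero one meet join.
Proof.
  repeat split; intros; eauto using le_refl, le_antisym, le_trans, le_one, meet_le_l,
    meet_le_r, meet_glb, join_ge_l, join_ge_r, join_lub, zero_le.
Qed.

Lemma heyting_of_consistent : is_heyting_algebra A zero one meet join imp.
Proof.
  split; [apply bounded_lattice_of_consistent|].
  split; [apply imp_elim | apply imp_intro].
Qed.

Lemma meet_join_distr a b c : meet a (join b c) = join (meet a b) (meet a c).
Proof.
  apply le_antisym.
  - apply (derivable1_le (val3 a b c) (And p (Or q r)) (Or (And p q) (And p r))).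
    apply (derivable_or_elim _ q r); [apply (derivable_and_elim_r _ p); by_hyp | |].
    + apply derivable_or_intro_l, derivable_and_intro;
        [apply (derivable_and_elim_l _ _ (Or q r)) |]; by_hyp.
    + apply derivable_or_intro_r, derivable_and_intro;
        [apply (derivable_and_elim_l _ _ (Or q r)) |]; by_hyp.
  - apply join_lub; apply meet_glb; auto using meet_le_l.
    + apply (le_trans _ b); [apply meet_le_r | apply join_ge_l].
    + apply (le_trans _ c); [apply meet_le_r | apply join_ge_r].
Qed.

Lemma meet_compl a : meet a (imp a zero) = zero.
Proof.
  apply le_antisym; [|apply zero_le].
  apply (derivable1_le (val3 a a a) (And p (Imp p Bot)) Bot).
  apply (d_mp _ _ p);
    [apply (derivable_and_elim_r _ p) | apply (derivable_and_elim_l _ _ (Imp p Bot))]; by_hyp.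
Qed.

Hypothesis ax_lem : forall f, ax (Or f (Imp f Bot)).

Lemma join_compl a : join a (imp a zero) = one.
Proof. apply (derivable0_one (val3 a a a) (Or p (Imp p Bot))), d_ax, ax_lem. Qed.

Lemma boolean_of_consistent : is_boolean_algebra A zero one meet join (fun a => imp a zero).
Proof.
  split; [apply bounded_lattice_of_consistent|].
  split; [apply meet_join_distr | split; [apply meet_compl | apply join_compl]].
Qed.

End Interpretation.

End Consequence.

Theorem theorem3 (A : Type) (zero one : A) (meet join imp : A -> A -> A) :
  is_alg_interp A one meet ->
  (consistent_with A zero one meet join imp IPC_entails ->
     is_heyting_algebra A zero one meet join imp) /\
  (consistent_with A zero one meet join imp CPC_entails ->
     is_boolean_algebra A zero one meet join (fun a => imp a zero)).
Proof.
  intro interp. split; intro consistent.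
  - exact (heyting_of_consistent ipc_axiom (fun f Hf => Hf) A zero one meet join imp
             interp consistent).
  - exact (boolean_of_consistent cpc_axiom ax_ipc A zero one meet join imp
             interp consistent ax_lem).
Qed.
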